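(* Let $\beta\in(0,2)$ and let $g:\mathbb{R}\to\mathbb{R}$ be measurable such that there exist $K>0$, $\kappa>-1/\beta$ and $\alpha>0$ with $\alpha\beta>2$ and $$|g(x)|\le K\big(x^\kappa\mathbf 1_{[0,1)}(x)+x^{-\alpha}\mathbf 1_{[1,\infty)}(x)\big)\quad\text{for all }x\in\mathbb{R}.$$ Fix $m\in\mathbb{N}$ and define, for $i\in\mathbb{Z}$, $$\rho_i=\int_{\mathbb{R}}|g(x)g(x+i)|^{\beta/2}\,\mathrm{d}x,\qquad \mu_i=\int_{-m}^{\infty}|g(x+i)|^\beta\,\mathrm{d}x.$$ Then there exists a constant $C>0$ such that for every $i\in\mathbb{N}$: (i) $\rho_i\le C\,i^{-\alpha\beta/2}$; (ii) if $i>m$, then $\mu_i\le C\,(i-m)^{1-\alpha\beta}$. *)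

From HB Require Import structures.
From mathcomp Require Import all_boot all_order all_algebra.
From mathcomp Require Export all_classical all_reals all_analysis.
Set Implicit Arguments.
Unset Strict Implicit.
Unset Printing Implicit Defensive.

From HB Require Import structures.
From mathcomp Require Import all_boot all_order all_algebra.
From mathcomp Require Import all_classical all_reals all_analysis.
From mathcomp Require Import measurable_realfun.
Import Order.TTheory GRing.Theory Num.Theory numFieldNormedType.Exports.
Local Open Scope classical_set_scope.
Local Open Scope ring_scope.

(** The envelope forces [g = 0] on the negative half-line and
    [|g x|^q <= K^q x^(-alpha q)] for [x >= 1].  For (i), when [x >= 0] and
    [i >= 1] this bounds the factor [|g (x + i)|^(beta/2)] by
    [K^(beta/2) i^(-alpha beta/2)], and the remaining [\int |g|^(beta/2)] is
    finite: [kappa beta/2 > -1] makes the envelope integrable at 0 and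
    [alpha beta/2 > 1] at infinity.  For (ii), [|g (x + i)|^beta] is at most
    [K^beta (x + i)^(-alpha beta)] on [[-m, +oo[], whose integral is
    [(i - m)^(1 - alpha beta) / (alpha beta - 1)] since [alpha beta > 1]. *)

Section power_integrals.
Context {R : realType}.
Local Notation mu := (@lebesgue_measure R).

Lemma ge0_powR_le (q x y : R) : 0 <= q -> 0 <= x -> x <= y -> x `^ q <= y `^ q.
Proof.
by move=> q0 x0 xy; apply: ge0_ler_powR; rewrite ?nnegrE // (le_trans x0 xy).
Qed.

Lemma ge0_powRN_le (q x y : R) : 0 <= q -> 0 < x -> x <= y ->
  y `^ (- q) <= x `^ (- q).
Proof.
move=> q0 x0 xy; rewrite !powRN lef_pV2 ?posrE ?powR_gt0 ?(lt_le_trans x0 xy) //.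
exact: ge0_powR_le (ltW x0) xy.
Qed.

Lemma ge0_integral_le_exhaustion (D : set R) (f : R -> R) (A : nat -> set R)
    (c : R) :
  measurable D -> (forall n, measurable (A n)) -> (forall n, A n `<=` D) ->
  {homo A : n k / (n <= k)%N >-> n `<=` k} -> D `<=` \bigcup_n A n ->
  measurable_fun D f -> (forall x, D x -> 0 <= f x) ->
  (forall n, \int[mu]_(x in A n) (f x)%:E <= c%:E)%E ->
  (\int[mu]_(x in D) (f x)%:E <= c%:E)%E.
Proof.
move=> mD mA AD And DA mf f0 intA.
pose fA : nat -> R -> \bar R := fun n => (EFin \o f) \_ (A n).
have mfA n : measurable_fun D ((EFin \o f) \_ (A n)).
  apply: (measurable_restrict (EFin \o f) (mA n) mD).1.
  apply: (measurable_funS mD); first by move=> x [].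
  exact/measurable_EFinP.
have fA0 n x : D x -> (0 <= fA n x)%E.
  by move=> Dx; rewrite /fA patchE; case: ifPn => // _; rewrite lee_fin f0.
have fAnd x : D x -> {homo fA^~ x : i j / (i <= j)%N >-> (i <= j)%E}.
  move=> Dx i j ij; rewrite /fA !patchE; case: ifPn => [|_].
    by rewrite inE => /(And _ _ ij) Aj; rewrite ifT // inE.
  by case: ifPn => // _; rewrite lee_fin f0.
have -> : (\int[mu]_(x in D) (f x)%:E = \int[mu]_(x in D) limn (fA^~ x))%E.
  apply: eq_integral => x; rewrite inE => Dx; apply/esym/cvg_lim => //.
  apply: cvg_near_cst; have [n _ Anx] := DA x Dx.
  near=> k; rewrite /fA patchE ifT // inE; apply: And Anx.
  by near: k; exists n.
rewrite monotone_convergence //; apply: lime_le.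
  apply: ereal_nondecreasing_is_cvgn => n k nk.
  apply: ge0_le_integral => //.
  - by move=> x Dx; exact: fA0.
  - exact: mfA.
  - exact: mfA.
  - by move=> x Dx; exact: fAnd.
by apply: nearW => n; rewrite -integral_mkcondr setIidr.
Unshelve. all: by end_near. Qed.

Lemma integral_shift_powR_itvcc (q a b s : R) : 0 < a + s -> a < b ->
  q + 1 != 0 ->
  (\int[mu]_(x in `[a, b]) ((x + s) `^ q)%:E =
   (((b + s) `^ (q + 1) - (a + s) `^ (q + 1)) / (q + 1))%:E)%E.
Proof.
move=> as0 ab q1.
have pos x : a <= x -> 0 < x + s by move=> ax; rewrite (lt_le_trans as0) ?lerD2r.
pose shift := fun y : R => y + s.
have dshift (x : R) : is_derive x 1 shift 1.
  by have := is_deriveD (is_derive_id x 1) (is_derive_cst s x 1); rewrite addr0.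
have dpow (e x : R) : 0 < x + s ->
    is_derive x 1 ((fun y : R => y `^ e) \o shift) (e * (x + s) `^ (e - 1) * 1).
  move=> xs0; exact: (@is_derive1_comp R (fun y : R => y `^ e) shift x _ _
    (is_derive1_powR e xs0) (dshift x)).
pose F := (q + 1)^-1 \*: ((fun y : R => y `^ (q + 1)) \o shift).
have dF (x : R) : 0 < x + s ->
    is_derive x 1 F ((q + 1)^-1 *: ((q + 1) * (x + s) `^ (q + 1 - 1) * 1)).
  by move=> xs0; apply: is_deriveZ; exact: dpow.
have cF (x : R) : 0 < x + s -> {for x, continuous F}.
  move=> xs0; apply: differentiable_continuous; rewrite -derivable1_diffP.
  by have [] := dF x xs0.
rewrite (continuous_FTC2 (F := F)) //.
- by rewrite /F /= -EFinB; congr EFin; rewrite -mulrBr mulrC.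
- apply: continuous_in_subspaceT => x; rewrite inE /= in_itv /= => /andP[ax _].
  apply: differentiable_continuous; rewrite -derivable1_diffP.
  by have [] := dpow q x (pos x ax).
- split.
  + move=> x; rewrite in_itv /= => /andP[/ltW ax _].
    by have [] := dF x (pos x ax).
  + exact/cvg_at_right_filter/cF.
  + exact/cvg_at_left_filter/cF/pos/ltW.
- move=> x; rewrite in_itv /= => /andP[/ltW ax _].
  rewrite derive1E; have [_ ->] := dF x (pos x ax).
  by rewrite addrK mulr1 /= -[_ *: _]/(_ * _) mulrA mulVf // mul1r.
Qed.

Lemma integral_powR_itvoc01_le (q : R) : -1 < q ->
  (\int[mu]_(x in `]0%R, 1%R]) (x `^ q)%:E <= ((q + 1)^-1)%:E)%E.
Proof.
move=> q1; have q10 : 0 < q + 1 by rewrite -ltrBlDr sub0r.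
apply: (@ge0_integral_le_exhaustion _ _ (fun n => `[n.+2%:R^-1, 1]%classic)).
- exact: measurable_itv.
- by move=> n; exact: measurable_itv.
- move=> n x /=; rewrite !in_itv /= => /andP[nx ->]; rewrite andbT.
  by rewrite (lt_le_trans _ nx) // invr_gt0.
- move=> n k nk x /=; rewrite !in_itv /= => /andP[nx ->]; rewrite andbT.
  by rewrite (le_trans _ nx) // lef_pV2 ?posrE // ler_nat !ltnS.
- move=> x /=; rewrite in_itv /= => /andP[x0 x1].
  exists (Num.truncn x^-1) => //=; rewrite in_itv /= x1 andbT.
  rewrite -[leRHS]invrK lef_pV2 ?posrE ?invr_gt0 //.
  by apply/ltW/(lt_trans (truncnS_gt _)); rewrite ltr_nat.
- by apply: measurable_funS (measurable_powR _) => //; exact: measurable_itv.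
- by move=> x _; exact: powR_ge0.
move=> n; have n0 : 0 < n.+2%:R^-1 :> R by rewrite invr_gt0.
under eq_integral do rewrite -[x in x `^ q]addr0.
rewrite integral_shift_powR_itvcc ?addr0 ?gt_eqF ?invf_lt1 ?ltr1n //.
by rewrite lee_fin powR1 -[leRHS]mul1r ler_pM2r ?invr_gt0 // gerBl powR_ge0.
Qed.

Lemma integral_shift_powRN_itvcy_le (r a s : R) : 1 < r -> 0 < a + s ->
  (\int[mu]_(x in `[a, +oo[) ((x + s) `^ (- r))%:E <=
   ((a + s) `^ (1 - r) / (r - 1))%:E)%E.
Proof.
move=> r1 as0.
apply: (@ge0_integral_le_exhaustion _ _ (fun n => `[a, a + n.+1%:R]%classic)).
- exact: measurable_itv.
- by move=> n; exact: measurable_itv.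
- by move=> n x /=; rewrite !in_itv /= => /andP[-> _].
- move=> n k nk x /=; rewrite !in_itv /= => /andP[-> xn] /=.
  by rewrite (le_trans xn) // lerD2l ler_nat !ltnS.
- move=> x /=; rewrite in_itv /= andbT => ax.
  exists (Num.truncn (x - a)) => //=; rewrite in_itv /= ax /=.
  by rewrite -lerBlDl; apply/ltW/truncnS_gt.
- apply: measurable_funTS; apply: (measurableT_comp (measurable_powR _)).
  exact: measurable_funD.
- by move=> x _; exact: powR_ge0.
move=> n; rewrite integral_shift_powR_itvcc //; last 2 first.
- by rewrite ltrDl.
- by rewrite addrC subr_eq0 eq_sym gt_eqF.
rewrite lee_fin (addrC (- r)) -[X in _ / X]opprB invrN mulrN -mulNr opprB.
by rewrite ler_pM2r ?invr_gt0 ?subr_gt0 // gerBl; exact: powR_ge0.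
Qed.

Definition power_envelope (a b x : R) : R :=
  ((fun y => y `^ a) \_ `]0%R, 1%R]) x + ((fun y => y `^ (- b)) \_ `[1%R, +oo[) x.

Lemma measurable_powR_restrict (a : R) (I : interval R) :
  measurable_fun setT ((fun x : R => x `^ a) \_ [set` I]).
Proof.
apply/(measurable_restrictT _ _).1; first exact: measurable_itv.
exact: measurable_funTS (measurable_powR _).
Qed.

Lemma power_envelope_ge0 (a b x : R) : 0 <= power_envelope a b x.
Proof. by rewrite /power_envelope !patchE addr_ge0 //; case: ifP; rewrite ?powR_ge0. Qed.

Lemma measurable_power_envelope (a b : R) : measurable_fun setT (power_envelope a b).
Proof. by apply: measurable_funD; exact: measurable_powR_restrict. Qed.

Lemma integral_power_envelope_le (a b : R) : -1 < a -> 1 < b ->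
  (\int[mu]_x (power_envelope a b x)%:E <= ((a + 1)^-1 + (b - 1)^-1)%:E)%E.
Proof.
move=> a1 b1; rewrite /power_envelope; under eq_integral do rewrite EFinD.
rewrite ge0_integralD //; last 4 first.
- by move=> x _; rewrite lee_fin patchE; case: ifP; rewrite ?powR_ge0.
- by apply/measurable_EFinP; exact: measurable_powR_restrict.
- by move=> x _; rewrite lee_fin patchE; case: ifP; rewrite ?powR_ge0.
- by apply/measurable_EFinP; exact: measurable_powR_restrict.
rewrite -[X in (X + _)%E]/(\int[mu]_x ((EFin \o _) x))%E -restrict_EFin -integral_mkcond.
rewrite -[X in (_ + X)%E]/(\int[mu]_x ((EFin \o _) x))%E -restrict_EFin -integral_mkcond.
rewrite EFinD leeD ?integral_powR_itvoc01_le //.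
under eq_integral do rewrite /= -[x in x `^ _]addr0.
by have := integral_shift_powRN_itvcy_le _ 1 0 b1; rewrite !addr0 powR1 mul1r; apply.
Qed.

End power_integrals.

Section power_law_envelope.
Context {R : realType} {g : R -> R} {K kappa alpha : R}.
Hypothesis K_gt0 : 0 < K.
Hypothesis g_envelope : forall {x : R}, x != 0 ->
  `|g x| <= K * ((if (0 <= x) && (x < 1) then x `^ kappa else 0)
                + (if 1 <= x then x `^ (- alpha) else 0)).
Local Notation mu := (@lebesgue_measure R).

Lemma g_eq0_lt0 (x : R) : x < 0 -> g x = 0.
Proof.
move=> x0; have := g_envelope (negbT (lt_eqF x0)).
rewrite [0 <= x]leNgt x0 [1 <= x]leNgt (lt_trans x0 ltr01) /= addr0 mulr0.
by rewrite normr_le0 => /eqP.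
Qed.

Lemma normg_powR_le_itvoo01 (q x : R) : 0 <= q -> 0 < x -> x < 1 ->
  `|g x| `^ q <= K `^ q * x `^ (kappa * q).
Proof.
move=> q0 x0 x1; have := g_envelope (negbT (gt_eqF x0)).
rewrite (ltW x0) x1 /= [1 <= x]leNgt x1 /= addr0 => gx.
rewrite powRrM -powRM ?powR_ge0 ?(ltW K_gt0) //.
exact: ge0_powR_le q0 (normr_ge0 _) gx.
Qed.

Lemma normg_powR_le_ge1 (q x : R) : 0 <= q -> 1 <= x ->
  `|g x| `^ q <= K `^ q * x `^ (- (alpha * q)).
Proof.
move=> q0 x1; have := g_envelope (negbT (gt_eqF (lt_le_trans ltr01 x1))).
rewrite x1 ltNge x1 andbF add0r => gx.
rewrite -mulNr powRrM -powRM ?powR_ge0 ?(ltW K_gt0) //.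
exact: ge0_powR_le q0 (normr_ge0 _) gx.
Qed.

Lemma normg_powR_le_envelope (q x : R) : 0 < q -> x != 0 ->
  `|g x| `^ q <= K `^ q * power_envelope (kappa * q) (alpha * q) x.
Proof.
move=> q0 x_neq0; have [x_lt0|x_ge0] := ltP x 0.
  by rewrite g_eq0_lt0 // normr0 powR0 ?gt_eqF // mulr_ge0 ?powR_ge0 ?power_envelope_ge0.
have {x_neq0 x_ge0} x0 : 0 < x by rewrite lt_neqAle eq_sym x_neq0.
have in01 : (x \in [set` `]0%R, 1%R]]) = (x <= 1) by rewrite mem_setE in_itv /= x0.
have in1y : (x \in [set` `[1%R, +oo[]) = (1 <= x) by rewrite mem_setE in_itv /= andbT.
rewrite /power_envelope !patchE in01 in1y.
have [x1|x1] := ltP x 1.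
  rewrite (ltW x1) addr0.
  exact: normg_powR_le_itvoo01 _ _ (ltW q0) x0 x1.
rewrite (le_trans (normg_powR_le_ge1 _ _ (ltW q0) x1)) // ler_wpM2l ?powR_ge0 //.
by rewrite lerDr; case: ifP; rewrite ?powR_ge0.
Qed.

Hypothesis g_measurable : measurable_fun setT g.

Lemma measurable_normg_powR (q : R) : measurable_fun setT (fun x : R => `|g x| `^ q).
Proof.
apply: (measurableT_comp (measurable_powR q)).
by apply: measurableT_comp; first exact: normr_measurable.
Qed.

Lemma integral_normg_powR_le (q : R) :
  0 < q -> -1 < kappa * q -> 1 < alpha * q ->
  (\int[mu]_x (`|g x| `^ q)%:E <=
   (K `^ q * ((kappa * q + 1)^-1 + (alpha * q - 1)^-1))%:E)%E.
Proof.
move=> q0 kq1 aq1; set env := power_envelope (kappa * q) (alpha * q).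
have menv : measurable_fun setT (fun x => K `^ q * env x).
  by apply: measurable_funM => //; exact: measurable_power_envelope.
have mD0 : measurable ([set: R] `\ 0%R) by exact: measurableD.
have mgq := measurable_normg_powR q.
(* The envelope says nothing about [g 0]; the point [0] is a null set. *)
rewrite -(@integral_setD1 R _ 0 setT mD0); last exact/measurable_EFinP/measurable_funTS.
apply: (@le_trans _ _ (\int[mu]_(x in [set: R] `\ 0%R) (K `^ q * env x)%:E)%E).
  apply: ge0_le_integral => //.
  - exact/measurable_EFinP/measurable_funTS.
  - exact/measurable_EFinP/measurable_funTS.
  - by move=> x [_ /eqP x_neq0]; rewrite lee_fin normg_powR_le_envelope.
rewrite (@integral_setD1 R _ 0 setT mD0); last exact/measurable_EFinP/measurable_funTS.
under eq_integral do rewrite EFinM.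
rewrite ge0_integralZl_EFin ?powR_ge0 //; last 2 first.
- by move=> x _; rewrite lee_fin power_envelope_ge0.
- by apply/measurable_EFinP; exact: measurable_power_envelope.
by rewrite EFinM lee_pmul2l ?lte_fin ?powR_gt0 // integral_power_envelope_le.
Qed.

Lemma integral_lag_product_le (q s : R) : 0 <= alpha -> 0 < q -> 1 <= s ->
  (\int[mu]_x (`|g x * g (x + s)| `^ q)%:E <=
   (K `^ q * s `^ (- (alpha * q)))%:E * \int[mu]_x (`|g x| `^ q)%:E)%E.
Proof.
move=> alpha0 q0 s1.
have lag x : `|g x * g (x + s)| `^ q <= K `^ q * s `^ (- (alpha * q)) * `|g x| `^ q.
  rewrite normrM powRM // mulrC; have [x_lt0|x_ge0] := ltP x 0.
    by rewrite (g_eq0_lt0 _ x_lt0) normr0 powR0 ?gt_eqF ?mulr0.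
  have xs1 : s <= x + s by rewrite lerDr.
  rewrite ler_wpM2r ?powR_ge0 //.
  apply: (le_trans (normg_powR_le_ge1 _ _ (ltW q0) (le_trans s1 xs1))).
  rewrite ler_wpM2l ?powR_ge0 //.
  by apply: ge0_powRN_le xs1; rewrite ?mulr_ge0 ?(ltW q0) ?(lt_le_trans ltr01 s1).
apply: (@le_trans _ _ (\int[mu]_x
    ((K `^ q * s `^ (- (alpha * q))) * `|g x| `^ q)%:E)%E).
  apply: ge0_le_integral => //.
  - apply/measurable_EFinP/(measurableT_comp (measurable_powR q)).
    apply: measurableT_comp; first exact: normr_measurable.
    apply: measurable_funM => //.
    by apply: (measurableT_comp g_measurable); exact: measurable_funD.
  - by apply/measurable_EFinP/measurable_funM => //; exact: measurable_normg_powR.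
  - by move=> x _; rewrite lee_fin lag.
under eq_integral do rewrite EFinM.
rewrite ge0_integralZl_EFin ?mulr_ge0 ?powR_ge0 //.
by apply/measurable_EFinP; exact: measurable_normg_powR.
Qed.

Lemma integral_lag_product_powR_le (q s : R) :
  0 <= alpha -> 0 < q -> -1 < kappa * q -> 1 < alpha * q -> 1 <= s ->
  (\int[mu]_x (`|g x * g (x + s)| `^ q)%:E <=
   (K `^ q * K `^ q * ((kappa * q + 1)^-1 + (alpha * q - 1)^-1)
      * s `^ (- (alpha * q)))%:E)%E.
Proof.
move=> alpha0 q0 kq1 aq1 s1.
apply: (le_trans (integral_lag_product_le _ _ alpha0 q0 s1)).
apply: (le_trans (lee_wpmul2l _ (integral_normg_powR_le _ q0 kq1 aq1))).
  by rewrite lee_fin mulr_ge0 ?powR_ge0.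
by rewrite -EFinM lee_fin mulrAC mulrA.
Qed.

Lemma integral_normg_shift_powR_itvcy_le (q a s : R) :
  0 < q -> 1 < alpha * q -> 1 <= a + s ->
  (\int[mu]_(x in `[a, +oo[) (`|g (x + s)| `^ q)%:E <=
   (K `^ q * (a + s) `^ (1 - alpha * q) / (alpha * q - 1))%:E)%E.
Proof.
move=> q0 aq1 as1; have as0 := lt_le_trans ltr01 as1.
have mshift : measurable_fun setT (fun x : R => x + s) by exact: measurable_funD.
apply: (@le_trans _ _ (\int[mu]_(x in `[a, +oo[)
    (K `^ q * (x + s) `^ (- (alpha * q)))%:E)%E).
  apply: ge0_le_integral => //.
  - exact/measurable_EFinP/measurable_funTS/(measurableT_comp (measurable_normg_powR q)).
  - apply/measurable_EFinP/measurable_funTS/measurable_funM => //.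
    exact: (measurableT_comp (measurable_powR _)).
  - move=> x; rewrite /= in_itv /= andbT => ax; rewrite lee_fin.
    by apply: normg_powR_le_ge1; [exact: ltW|rewrite (le_trans as1) ?lerD2r].
under eq_integral do rewrite EFinM.
rewrite ge0_integralZl_EFin ?powR_ge0 //; last 2 first.
- by move=> x _; rewrite lee_fin powR_ge0.
- exact/measurable_EFinP/measurable_funTS/(measurableT_comp (measurable_powR _)).
rewrite -mulrA EFinM lee_pmul2l ?lte_fin ?powR_gt0 //.
exact: integral_shift_powRN_itvcy_le.
Qed.

End power_law_envelope.

Theorem lemmaA1 (R : realType) (beta : R) (g : R -> R) (K kappa alpha : R) (m : nat) :
  0 < beta -> beta < 2 ->
  measurable_fun setT g ->
  0 < K -> - beta^-1 < kappa -> 0 < alpha -> 2 < alpha * beta ->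
  (forall x : R, x != 0 ->
     `|g x| <= K * ((if (0 <= x) && (x < 1) then x `^ kappa else 0)
                   + (if 1 <= x then x `^ (- alpha) else 0))) ->
  exists C : R, 0 < C /\
    forall i : nat, (0 < i)%N ->
      (\int[lebesgue_measure]_(x in [set: R])
          (`|g x * g (x + i%:R)| `^ (beta / 2))%:E
         <= (C * i%:R `^ (- (alpha * beta / 2)))%:E)%E
      /\ ((m < i)%N ->
      (\int[lebesgue_measure]_(x in [set x : R | (- (m%:R) <= x)%R])
          (`|g (x + i%:R)| `^ beta)%:E
         <= (C * (i%:R - m%:R) `^ (1 - alpha * beta))%:E)%E).
Proof.
move=> beta_gt0 _ mg K_gt0 kappa_gt alpha_gt0 alpha_beta_gt2 g_env.
set p := beta / 2.
have p_gt0 : 0 < p by rewrite divr_gt0.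
have kappa_p : -1 < kappa * p.
  apply: le_lt_trans (_ : - beta^-1 * p < _); last by rewrite ltr_pM2r.
  rewrite /p mulrA mulNr mulVf ?gt_eqF // mulNr mul1r lerN2 invf_le1 // ler1n //.
have alpha_p : 1 < alpha * p by rewrite /p mulrA ltr_pdivlMr // mul1r.
have alpha_beta : 1 < alpha * beta by rewrite (lt_trans _ alpha_beta_gt2) // ltr1n.
set M := (kappa * p + 1)^-1 + (alpha * p - 1)^-1.
have M_gt0 : 0 < M.
  by rewrite addr_gt0 // invr_gt0 ?subr_gt0 // -ltrBlDr sub0r.
set C1 := K `^ p * K `^ p * M.
set C2 := K `^ beta / (alpha * beta - 1).
have C1_gt0 : 0 < C1 by rewrite !mulr_gt0 ?powR_gt0.
have C2_ge0 : 0 <= C2 by rewrite divr_ge0 ?powR_ge0 // subr_ge0 ltW.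
exists (C1 + C2); split => [|i i_gt0]; first exact: ltr_wpDr.
split => [|m_lt_i].
  have i_ge1 : 1 <= i%:R :> R by rewrite ler1n.
  have -> : alpha * beta / 2 = alpha * p by rewrite mulrA.
  have lag := integral_lag_product_powR_le K_gt0 g_env mg _ _ (ltW alpha_gt0) p_gt0
    kappa_p alpha_p i_ge1.
  apply: (le_trans lag); rewrite lee_fin -/M -/C1.
  by rewrite ler_wpM2r ?powR_ge0 // lerDl.
have i_sub_m : 1 <= - m%:R + i%:R :> R.
  by rewrite addrC -natrB ?ler1n ?subn_gt0 // ltnW.
have -> : [set x : R | - m%:R <= x] = `[- m%:R, +oo[%classic.
  by apply/seteqP; split => x /=; rewrite in_itv /= andbT.
have tail :=
  integral_normg_shift_powR_itvcy_le K_gt0 g_env mg _ _ _ beta_gt0 alpha_beta i_sub_m.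
apply: (le_trans tail).
by rewrite lee_fin [- _ + _]addrC mulrAC -/C2 ler_wpM2r ?powR_ge0 // lerDr ltW.
Qed.
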